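(* Let $\tau_n:=\max\{k\ge1:U_{n-k}=k\}$ (the number of red balls in the urn right after the last black ball has been removed). Then $\tau_n$ has the same distribution as $\tau_n':=\max\{k\ge1:U_k=k\}$, and for $k\ge1$ \[ \mathbf P(\tau_n\ge k)=\frac{(n-k)(n-k-1)\cdots(n-2k+1)}{(n-1)(n-2)\cdots(n-k)}. \] Consequently, for every $t\ge0$, $\mathbf P(\tau_n/\sqrt n\ge t)\to e^{-t^2}$ as $n\to\infty$.
   Context: Urn process: let $n\ge2$. An urn initially contains $n$ black balls. It is emptied in $n$ steps: in each of the first $n-1$ steps a uniformly random pair of balls is removed from the urn and replaced by one red ball; in step $n$ the last remaining ball is removed. $U_k$ is the number of red balls in the urn after $k$ steps, $0\le k\le n$. *)

From Stdlib Require Import Reals Lra Lia ZArith Arith List.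
Import ListNotations.
Open Scope R_scope.

Definition choose2 (x : nat) : R := INR (x * (x - 1)) / 2.

(* One pairing step of the urn, from an urn with m balls of which r are red
   (hence b = m - r black).  A uniformly random pair is removed and replaced by
   one red ball.  Result: list of (new number of red balls, probability).
     two black  : r -> r+1, prob C(b,2)/C(m,2)
     black+red  : r -> r,   prob b*r /C(m,2)
     two red    : r -> r-1, prob C(r,2)/C(m,2)                                *)
Definition trans (m r : nat) : list (nat * R) :=
  let b := (m - r)%nat in
  [ (S r, choose2 b / choose2 m);
    (r, INR (b * r) / choose2 m);
    (Nat.pred r, choose2 r / choose2 m) ].

(* Expectation of f over the random continuation of the red-ball count,
   running j more pairing steps from an urn with m balls, r of them red.
   f receives the list of successive red-ball counts after each step. *)
Fixpoint pathE (j m r : nat) (f : list nat -> R) {struct j} : R :=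
  match j with
  | O => f nil
  | S j' =>
      fold_right Rplus 0
        (map (fun q : nat * R =>
                snd q * pathE j' (m - 1) (fst q) (fun s => f (fst q :: s)))
             (trans m r))
  end.

(* Expectation of a functional of the whole trajectory
   U = [U_0; U_1; ...; U_n] of the urn process started with n black balls:
   U_0 = 0, steps 1..n-1 are pairing steps, and at step n the last ball is
   removed so U_n = 0. *)
Definition urnE (n : nat) (f : list nat -> R) : R :=
  pathE (n - 1) n 0 (fun s => f (0%nat :: s ++ [0%nat])).

Definition urnP (n : nat) (A : list nat -> bool) : R :=
  urnE n (fun U => if A U then 1 else 0).

Definition U_at (U : list nat) (k : nat) : nat := nth k U 0%nat.

(* tau_n = max{k >= 1 : U_{n-k} = k}  (k ranges over 1..n; 0 if no such k,
   which never happens for n >= 2 since U_{n-1} = 1). *)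
Definition tau (n : nat) (U : list nat) : nat :=
  fold_left (fun acc k => if Nat.eqb (U_at U (n - k)) k then k else acc)
            (seq 1 n) 0%nat.

Definition tau' (n : nat) (U : list nat) : nat :=
  fold_left (fun acc k => if Nat.eqb (U_at U k) k then k else acc)
            (seq 1 n) 0%nat.

(* prod_{i=0}^{k-1} (n-k-i)/(n-1-i)
   = (n-k)(n-k-1)...(n-2k+1) / ((n-1)(n-2)...(n-k)), with integer factors. *)
Definition tau_tail (n k : nat) : R :=
  fold_right Rmult 1
    (map (fun i => IZR (Z.of_nat n - Z.of_nat k - Z.of_nat i)%Z
                   / IZR (Z.of_nat n - 1 - Z.of_nat i)%Z)
         (seq 0 k)).

From Stdlib Require Import Reals Lra Lia ZArith Arith List.
From Coquelicot Require Import Coquelicot.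
Import ListNotations.
Open Scope R_scope.

(* tau'_n >= k says that the first k draws all take two black balls, so its probability is
   a telescoping product of all-black draw probabilities.  tau_n >= k says that k steps
   before the end the urn holds only red balls: the number of black balls never increases,
   so U_(n-j) = j for some j >= k forces U_(n-k) = k.  This probability is read off the law
   P(U_t = x) = C(n-t,x) C(t-1,x-1) / C(n-1,t) of the red count, which is checked against
   the forward equation of the chain.  Both tails equal (n-k)_k / (n-1)_k, whence the
   equality in law.  For the limit take k = ceil(t sqrt n) and squeeze every factor
   1 - (k-1)/(n-1-i) of the tail between exp(-x-2x^2) and exp(-x); both resulting exponents
   tend to t^2. *)

(** * The urn chain *)

Definition prob_bb (m r : nat) : R := choose2 (m - r) / choose2 m.
Definition prob_br (m r : nat) : R := INR ((m - r) * r) / choose2 m.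
Definition prob_rr (m r : nat) : R := choose2 r / choose2 m.

Lemma pathE_S j m r f :
  pathE (S j) m r f =
  prob_bb m r * pathE j (m - 1) (S r) (fun s => f (S r :: s)) +
  (prob_br m r * pathE j (m - 1) r (fun s => f (r :: s)) +
  (prob_rr m r * pathE j (m - 1) (pred r) (fun s => f (pred r :: s)) + 0)).
Proof. reflexivity. Qed.

Lemma choose2_INR x : choose2 x = INR x * (INR x - 1) / 2.
Proof.
  unfold choose2; destruct x as [|x]; [simpl; lra|].
  rewrite mult_INR, Nat.sub_succ, Nat.sub_0_r, S_INR; field.
Qed.

Lemma choose2_gt0 x : (2 <= x)%nat -> 0 < choose2 x.
Proof.
  intros Hx; rewrite choose2_INR.
  assert (2 <= INR x) by (apply (le_INR 2); lia); nra.
Qed.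

Lemma choose2_le1 x : (x <= 1)%nat -> choose2 x = 0.
Proof. intros Hx; destruct x as [|[|]]; try lia; unfold choose2; simpl; lra. Qed.

Lemma Rmult_eq_compat_nonzero (w a b : R) : (w <> 0 -> a = b) -> w * a = w * b.
Proof. intros H; destruct (Req_dec w 0) as [->|Hw]; [ring | now rewrite H]. Qed.

Lemma prob_bb_nz m r : prob_bb m r <> 0 -> (S r <= m - 1)%nat.
Proof.
  unfold prob_bb; intros H.
  destruct (le_lt_dec 2 (m - r)); [lia|].
  rewrite choose2_le1 in H by lia; unfold Rdiv in H; lra.
Qed.

Lemma prob_br_nz m r : prob_br m r <> 0 -> (1 <= r <= m - 1)%nat.
Proof.
  unfold prob_br; intros H.
  destruct (Nat.eq_dec ((m - r) * r) 0) as [E|E].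
  - rewrite E in H; simpl in H; unfold Rdiv in H; lra.
  - apply Nat.neq_mul_0 in E; lia.
Qed.

Lemma prob_rr_nz m r : prob_rr m r <> 0 -> (2 <= r)%nat.
Proof.
  unfold prob_rr; intros H.
  destruct (le_lt_dec 2 r); [lia|].
  rewrite choose2_le1 in H by lia; unfold Rdiv in H; lra.
Qed.

Lemma prob_sum m r : (r <= m)%nat -> (2 <= m)%nat ->
  prob_bb m r + (prob_br m r + (prob_rr m r + 0)) = 1.
Proof.
  intros Hr Hm; unfold prob_bb, prob_br, prob_rr.
  assert (2 <= INR m) by (apply (le_INR 2); lia).
  rewrite !choose2_INR, mult_INR, minus_INR by lia.
  field; nra.
Qed.

(* Every path of positive probability is feasible, so [pathE] only sees feasible paths. *)
Fixpoint feasible (m r : nat) (s : list nat) : Prop :=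
  match s with
  | nil => True
  | x :: s' => (x <= m - 1 /\ x <= S r /\ r <= S x)%nat /\ feasible (m - 1) x s'
  end.

Lemma pathE_ext j m r f g : (r <= m)%nat ->
  (forall s, length s = j -> feasible m r s -> f s = g s) ->
  pathE j m r f = pathE j m r g.
Proof.
  revert m r f g; induction j as [|j IHj]; intros m r f g Hr H; [apply H; simpl; auto|].
  rewrite !pathE_S; f_equal; [|f_equal; [|f_equal]];
    apply Rmult_eq_compat_nonzero; intros Hw;
    [apply prob_bb_nz in Hw | apply prob_br_nz in Hw | apply prob_rr_nz in Hw];
    (apply IHj; [lia|]; intros s Hl Hs; apply H; simpl; [lia | split; [lia | exact Hs]]).
Qed.

Lemma pathE_minus j m r f g :
  pathE j m r (fun s => f s - g s) = pathE j m r f - pathE j m r g.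
Proof.
  revert m r f g; induction j as [|j IHj]; intros m r f g; [reflexivity|].
  rewrite !pathE_S, !IHj; ring.
Qed.

Fixpoint expect_at (t m r : nat) (G : nat -> R) {struct t} : R :=
  match t with
  | O => G r
  | S t' => prob_bb m r * expect_at t' (m - 1) (S r) G
            + (prob_br m r * expect_at t' (m - 1) r G
            + (prob_rr m r * expect_at t' (m - 1) (pred r) G + 0))
  end.

Lemma pathE_const j m r c : (r <= m)%nat -> (j < m)%nat -> pathE j m r (fun _ => c) = c.
Proof.
  revert m r; induction j as [|j IHj]; intros m r Hr Hj; [reflexivity|].
  rewrite pathE_S.
  transitivity ((prob_bb m r + (prob_br m r + (prob_rr m r + 0))) * c);
    [| rewrite prob_sum by lia; ring].
  rewrite !Rmult_plus_distr_r; f_equal; [|f_equal; [|f_equal]]; try ring;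
    apply Rmult_eq_compat_nonzero; intros Hw;
    [apply prob_bb_nz in Hw | apply prob_br_nz in Hw | apply prob_rr_nz in Hw];
    apply IHj; lia.
Qed.

Lemma pathE_nth i j m r G : (i <= j)%nat -> (r <= m)%nat -> (j < m)%nat ->
  pathE j m r (fun s => G (nth i (r :: s) 0%nat)) = expect_at i m r G.
Proof.
  revert j m r; induction i as [|i IHi]; intros j m r Hij Hr Hj.
  - exact (pathE_const j m r (G r) Hr Hj).
  - destruct j as [|j]; [lia|]; rewrite pathE_S; simpl expect_at.
    f_equal; [|f_equal; [|f_equal]]; apply Rmult_eq_compat_nonzero; intros Hw;
      [apply prob_bb_nz in Hw | apply prob_br_nz in Hw | apply prob_rr_nz in Hw];
      apply IHi; lia.
Qed.

Definition indicator (y x : nat) : R := if Nat.eqb x y then 1 else 0.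

Definition prodR (f : nat -> R) (k : nat) : R := fold_right Rmult 1 (map f (seq 0 k)).

Lemma prodR_succ_l f k : prodR f (S k) = f 0%nat * prodR (fun i => f (S i)) k.
Proof. unfold prodR; simpl; now rewrite <- seq_shift, map_map. Qed.

Lemma prodR_succ_r f k : prodR f (S k) = prodR f k * f k.
Proof.
  unfold prodR; rewrite seq_S, map_app, fold_right_app; simpl.
  generalize (map f (seq 0 k)); intros l; induction l as [|a l IHl]; simpl; [ring|].
  rewrite IHl; ring.
Qed.

Lemma prodR_ext f g k : (forall i, (i < k)%nat -> f i = g i) -> prodR f k = prodR g k.
Proof.
  intros H; unfold prodR; f_equal; apply map_ext_in.
  intros i Hi; apply in_seq in Hi; apply H; lia.
Qed.

Lemma expect_at_indicator_unreachable t m r y : (r + t < y)%nat ->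
  expect_at t m r (indicator y) = 0.
Proof.
  revert m r; induction t as [|t IHt]; intros m r H; simpl.
  - unfold indicator; destruct (Nat.eqb_spec r y); [lia | reflexivity].
  - rewrite !IHt by lia; ring.
Qed.

(* Reaching [r + t] in [t] steps forces every draw to take two black balls. *)
Lemma expect_at_indicator_top t m r :
  expect_at t m r (indicator (r + t)) = prodR (fun i => prob_bb (m - i) (r + i)) t.
Proof.
  revert m r; induction t as [|t IHt]; intros m r.
  - simpl; unfold indicator; now rewrite Nat.add_0_r, Nat.eqb_refl.
  - simpl expect_at; replace (r + S t)%nat with (S r + t)%nat by lia.
    rewrite IHt, !expect_at_indicator_unreachable by lia.
    rewrite prodR_succ_l, Nat.sub_0_r, Nat.add_0_r.
    replace (prodR _ t) with (prodR (fun i => prob_bb (m - S i) (r + S i)) t);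
      [ring | apply prodR_ext; intros i _; f_equal; lia].
Qed.

Definition step_expect (m x : nat) (G : nat -> R) : R :=
  prob_bb m x * G (S x) + (prob_br m x * G x + (prob_rr m x * G (pred x) + 0)).

Lemma expect_at_S_last t m r G :
  expect_at (S t) m r G = expect_at t m r (fun x => step_expect (m - t) x G).
Proof.
  revert m r; induction t as [|t IHt]; intros m r.
  - simpl; unfold step_expect; rewrite Nat.sub_0_r; ring.
  - change (expect_at (S (S t)) m r G) with
      (prob_bb m r * expect_at (S t) (m - 1) (S r) G
       + (prob_br m r * expect_at (S t) (m - 1) r G
       + (prob_rr m r * expect_at (S t) (m - 1) (pred r) G + 0))).
    rewrite !IHt; replace (m - 1 - t)%nat with (m - S t)%nat by lia; reflexivity.
Qed.

(** * Binomial coefficients and falling factorials *)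

Open Scope nat_scope.

Fixpoint binom (n k : nat) : nat :=
  match n, k with
  | _, O => 1
  | O, S _ => 0
  | S n', S k' => binom n' k' + binom n' k
  end.

Lemma binom_n0 n : binom n 0 = 1.
Proof. now destruct n. Qed.

Lemma binom_small n k : n < k -> binom n k = 0.
Proof.
  revert k; induction n as [|n IHn]; intros [|k] H; simpl; try lia.
  rewrite !IHn by lia; reflexivity.
Qed.

Lemma binom_succ_mul n k : binom (S n) (S k) * S k = S n * binom n k.
Proof.
  revert k; induction n as [|n IHn]; intros [|k].
  - reflexivity.
  - simpl; lia.
  - change (binom (S (S n)) 1) with (binom (S n) 0 + binom (S n) 1).
    pose proof (IHn 0); rewrite binom_n0 in *; lia.
  - change (binom (S (S n)) (S (S k))) with (binom (S n) (S k) + binom (S n) (S (S k))).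
    pose proof (IHn (S k)); pose proof (IHn k) as Hk.
    change (binom (S n) (S k)) with (binom n k + binom n (S k)) in *.
    nia.
Qed.

Lemma binom_succ_r n k : binom n (S k) * S k = binom n k * (n - k).
Proof.
  destruct (le_lt_dec k n) as [Hk|Hk].
  - pose proof (binom_succ_mul n k) as H.
    change (binom (S n) (S k)) with (binom n k + binom n (S k)) in H.
    replace (n - k) with (S n - S k) by lia; nia.
  - rewrite !binom_small by lia; lia.
Qed.

Lemma binom_succ_l n k : S n * binom n (S k) = (n - k) * binom (S n) (S k).
Proof.
  pose proof (binom_succ_mul n k); pose proof (binom_succ_r n k).
  apply (Nat.mul_cancel_r _ _ (S k)); [lia | nia].
Qed.

Lemma binom_fact n k : k <= n -> binom n k * fact k * fact (n - k) = fact n.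
Proof.
  revert k; induction n as [|n IHn]; intros [|k] Hk; try lia.
  - reflexivity.
  - rewrite binom_n0, Nat.sub_0_r; simpl; lia.
  - pose proof (binom_succ_mul n k) as H; specialize (IHn k ltac:(lia)).
    replace (S n - S k) with (n - k) by lia.
    change (fact (S k)) with (S k * fact k); change (fact (S n)) with (S n * fact n).
    rewrite <- IHn.
    transitivity (binom (S n) (S k) * S k * fact k * fact (n - k)); [ring|].
    rewrite H; ring.
Qed.

Lemma binom_pos n k : k <= n -> 0 < binom n k.
Proof.
  intros Hk; pose proof (binom_fact n k Hk); pose proof (lt_O_fact n).
  destruct (binom n k); simpl in *; lia.
Qed.

Lemma binom_nn n : binom n n = 1.
Proof.
  pose proof (binom_fact n n (le_n _)) as H; rewrite Nat.sub_diag in H; simpl in H.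
  pose proof (lt_O_fact n); nia.
Qed.

Definition binom_shift (t x : nat) : nat := match x with O => 0 | S y => binom t y end.

Lemma binom_pascal2 t z :
  binom_shift t z + 2 * binom t z + binom t (S z) = binom (S (S t)) (S z).
Proof.
  change (binom (S (S t)) (S z)) with (binom (S t) z + binom (S t) (S z)).
  change (binom (S t) (S z)) with (binom t z + binom t (S z)).
  destruct z as [|z]; simpl binom_shift.
  - rewrite !binom_n0; lia.
  - change (binom (S t) (S z)) with (binom t z + binom t (S z)); lia.
Qed.

Fixpoint ffact (a k : nat) : nat := match k with O => 1 | S k' => ffact a k' * (a - k') end.

Lemma ffact_fact a k : k <= a -> ffact a k * fact (a - k) = fact a.
Proof.
  induction k as [|k IHk]; intros Hk; simpl ffact.
  - rewrite Nat.sub_0_r; lia.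
  - specialize (IHk ltac:(lia)).
    replace (a - k) with (S (a - S k)) in * by lia.
    change (fact (S (a - S k))) with (S (a - S k) * fact (a - S k)) in IHk; nia.
Qed.

Lemma ffact_pos a k : k <= a -> 0 < ffact a k.
Proof.
  intros Hk; pose proof (ffact_fact a k Hk); pose proof (lt_O_fact a).
  destruct (ffact a k); simpl in *; lia.
Qed.

Lemma ffact_succ_l a k : ffact a (S k) = a * ffact (a - 1) k.
Proof.
  induction k as [|k IHk]; [simpl; lia|].
  change (ffact a (S (S k))) with (ffact a (S k) * (a - S k)).
  rewrite IHk; simpl; replace (a - 1 - k) with (a - S k) by lia; lia.
Qed.

Lemma ffact_pred_succ a k : ffact (a - 1) (S k) * a = ffact a k * ((a - k) * (a - S k)).
Proof.
  pose proof (ffact_succ_l a (S k)) as H; simpl ffact in H |- *.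
  rewrite Nat.mul_comm, <- H; ring.
Qed.

Lemma binom_ffact_cross q d :
  binom (q + d) q * ffact (2 * q + d + 1) (q + 1)
  = ffact (q + d + 1) (q + 1) * binom (2 * q + d + 1) (q + d + 1).
Proof.
  pose proof (binom_fact (q + d) q ltac:(lia)) as F1.
  pose proof (ffact_fact (2 * q + d + 1) (q + 1) ltac:(lia)) as F2.
  pose proof (ffact_fact (q + d + 1) (q + 1) ltac:(lia)) as F3.
  pose proof (binom_fact (2 * q + d + 1) (q + d + 1) ltac:(lia)) as F4.
  replace (q + d - q) with d in F1 by lia.
  replace (2 * q + d + 1 - (q + 1)) with (q + d) in F2 by lia.
  replace (q + d + 1 - (q + 1)) with d in F3 by lia.
  replace (2 * q + d + 1 - (q + d + 1)) with q in F4 by lia.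
  pose proof (lt_O_fact q); pose proof (lt_O_fact d); pose proof (lt_O_fact (q + d)).
  apply (Nat.mul_cancel_r _ _ (fact q * fact d * fact (q + d))); [nia|].
  transitivity ((binom (q + d) q * fact q * fact d)
                * (ffact (2 * q + d + 1) (q + 1) * fact (q + d))); [ring|].
  rewrite F1, F2.
  transitivity ((binom (2 * q + d + 1) (q + d + 1) * (ffact (q + d + 1) (q + 1) * fact d)
                 * fact q) * fact (q + d)); [|ring].
  rewrite F3, F4; ring.
Qed.

Close Scope nat_scope.

(** * The law of the red count *)

(* The forward equation for [red_dist] below, cleared of denominators. *)
Lemma red_dist_recurrence_nat m t z : (2 <= m)%nat ->
  (binom m z * binom_shift t z * ((m - z) * (m - z - 1))
   + 2 * (binom m (S z) * binom t z * ((m - S z) * S z))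
   + binom m (S (S z)) * binom t (S z) * (S (S z) * (S (S z) - 1))
   = binom (m - 1) (S z) * binom (S t) z * (m * S (S t)))%nat.
Proof.
  intros Hm; destruct m as [|m]; [lia|].
  replace (S m - 1)%nat with m by lia.
  replace (S (S z) - 1)%nat with (S z) by lia.
  replace (S m - z - 1)%nat with (S m - S z)%nat by lia.
  pose proof (binom_succ_l m z) as H1; change (m - z)%nat with (S m - S z)%nat in H1.
  pose proof (binom_succ_mul (S t) z) as H2; rewrite <- binom_pascal2 in H2.
  pose proof (binom_succ_r (S m) z) as H3.
  pose proof (binom_succ_r (S m) (S z)) as H4.
  set (X := (binom (S m) (S z) * (S m - S z) * S z)%nat).
  assert (E1 : (binom (S m) z * ((S m - z) * (S m - S z)) = X)%nat).
  { unfold X; rewrite Nat.mul_assoc, <- H3; ring. }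
  assert (E3 : (binom (S m) (S (S z)) * (S (S z) * S z) = X)%nat).
  { unfold X; rewrite Nat.mul_assoc, H4; ring. }
  assert (E : (binom m (S z) * binom (S t) z * (S m * S (S t))
               = X * (binom_shift t z + 2 * binom t z + binom t (S z)))%nat).
  { unfold X.
    transitivity ((S m * binom m (S z)) * (S (S t) * binom (S t) z))%nat; [ring|].
    rewrite H1, <- H2; ring. }
  rewrite E.
  transitivity ((binom (S m) z * ((S m - z) * (S m - S z))) * binom_shift t z
    + 2 * X * binom t z
    + (binom (S m) (S (S z)) * (S (S z) * S z)) * binom t (S z))%nat;
    [unfold X; ring|].
  rewrite E1, E3; ring.
Qed.

(* P(U_t = x) = C(n-t, x) C(t-1, x-1) / C(n-1, t) for 1 <= t <= n - 1. *)
Definition red_dist (n t x : nat) : R :=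
  INR (binom (n - t) x * binom_shift (t - 1) x) / INR (binom (n - 1) t).

Lemma red_dist_0 n t : red_dist n t 0 = 0.
Proof. unfold red_dist; simpl; rewrite Nat.mul_0_r; simpl; unfold Rdiv; ring. Qed.

Lemma red_dist_large n t x : (1 <= t <= n)%nat -> (n <= x)%nat -> red_dist n t x = 0.
Proof. intros Ht Hx; unfold red_dist; rewrite binom_small by lia; simpl; unfold Rdiv; ring. Qed.

Lemma red_dist_step_succ n t z : (2 <= n)%nat -> (S (S t) <= n - 1)%nat ->
  red_dist n (S t) z * prob_bb (n - S t) z
  + red_dist n (S t) (S z) * prob_br (n - S t) (S z)
  + red_dist n (S t) (S (S z)) * prob_rr (n - S t) (S (S z))
  = red_dist n (S (S t)) (S z).
Proof.
  intros Hn Ht.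
  set (m := (n - S t)%nat).
  assert (Hm : (2 <= m)%nat) by lia.
  assert (Hmn : m = (n - S t)%nat) by reflexivity; clearbody m.
  pose proof (red_dist_recurrence_nat m t z Hm) as HN.
  pose proof (binom_succ_r (n - 1) (S t)) as HK.
  replace (n - 1 - S t)%nat with (m - 1)%nat in HK by lia.
  apply (f_equal INR) in HK; rewrite !mult_INR in HK.
  apply (f_equal INR) in HN; rewrite !plus_INR, !mult_INR in HN.
  unfold red_dist, prob_bb, prob_br, prob_rr, choose2.
  replace (n - S (S t))%nat with (m - 1)%nat by lia.
  rewrite <- Hmn; replace (S (S t) - 1)%nat with (S t) by lia.
  replace (S t - 1)%nat with t by lia.
  change (binom_shift t (S z)) with (binom t z).
  change (binom_shift t (S (S z))) with (binom t (S z)).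
  change (binom_shift (S t) (S z)) with (binom (S t) z).
  rewrite !mult_INR.
  assert (K0 : INR (binom (n - 1) (S t)) <> 0)
    by (apply not_0_INR; pose proof (binom_pos (n - 1) (S t)); lia).
  assert (M0 : INR m <> 0) by (apply not_0_INR; lia).
  assert (M1 : INR (m - 1) <> 0) by (apply not_0_INR; lia).
  assert (T0 : INR (S (S t)) <> 0) by (apply not_0_INR; lia).
  replace (INR (binom (n - 1) (S (S t))))
    with (INR (binom (n - 1) (S t)) * INR (m - 1) / INR (S (S t)))
    by (rewrite <- HK; field; auto).
  apply (Rmult_eq_reg_r (INR (binom (n - 1) (S t)) * INR m * INR (m - 1))).
  2:{ repeat apply Rmult_integral_contrapositive_currified; auto. }
  replace (INR 2) with 2 in HN by (simpl; lra).
  match type of HN with ?L = ?R => transitivity L; [field; auto | rewrite HN; field; auto] end.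
Qed.

Definition shift_right (a : nat -> R) (y : nat) : R := match y with O => 0 | S y' => a y' end.

Lemma red_dist_step n t y : (2 <= n)%nat -> (S (S t) <= n - 1)%nat ->
  shift_right (fun x => red_dist n (S t) x * prob_bb (n - S t) x) y
  + red_dist n (S t) y * prob_br (n - S t) y
  + red_dist n (S t) (S y) * prob_rr (n - S t) (S y)
  = red_dist n (S (S t)) y.
Proof.
  intros Hn Ht; destruct y as [|y].
  - simpl; rewrite !red_dist_0; unfold prob_rr; rewrite (choose2_le1 1) by lia.
    unfold Rdiv; ring.
  - now apply red_dist_step_succ.
Qed.

Lemma sum_f_R0_single f a N : (a <= N)%nat -> (forall x, x <> a -> f x = 0) ->
  sum_f_R0 f N = f a.
Proof.
  induction N as [|N IHN]; intros Ha H.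
  - simpl; now replace a with 0%nat by lia.
  - simpl; destruct (Nat.eq_dec a (S N)) as [->|E].
    + rewrite (sum_eq_R0 f N); [ring|]; intros x Hx; apply H; lia.
    + rewrite IHN, (H (S N)) by (auto; lia); ring.
Qed.

Lemma sum_shift_up a G N : a N = 0 ->
  sum_f_R0 (fun x => a x * G (S x)) N = sum_f_R0 (fun y => shift_right a y * G y) N.
Proof.
  intros HN.
  assert (Hs : forall M, sum_f_R0 (fun y => shift_right a y * G y) (S M)
                         = sum_f_R0 (fun x => a x * G (S x)) M).
  { induction M as [|M IHM]; [simpl; ring|].
    rewrite tech5, IHM; simpl; ring. }
  destruct N as [|N]; [simpl; rewrite HN; ring|].
  rewrite <- Hs, tech5; simpl; rewrite HN; ring.
Qed.

Lemma sum_shift_down c G N : c 0%nat = 0 -> c (S N) = 0 ->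
  sum_f_R0 (fun x => c x * G (pred x)) N = sum_f_R0 (fun y => c (S y) * G y) N.
Proof.
  intros H0 HN.
  assert (Hs : forall M, sum_f_R0 (fun x => c x * G (pred x)) (S M)
                         = c 0%nat * G 0%nat + sum_f_R0 (fun y => c (S y) * G y) M).
  { induction M as [|M IHM]; [simpl; ring|].
    rewrite tech5, IHM; simpl; ring. }
  destruct N as [|N]; [simpl; rewrite H0, HN; ring|].
  rewrite Hs, H0, tech5; simpl; rewrite HN; ring.
Qed.

Lemma expect_at_red_dist n t G : (2 <= n)%nat -> (1 <= t <= n - 1)%nat ->
  expect_at t n 0 G = sum_f_R0 (fun x => red_dist n t x * G x) n.
Proof.
  intros Hn; revert G; induction t as [|[|t] IHt]; intros G Ht; [lia| |].
  - simpl; unfold prob_bb, prob_br, prob_rr.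
    rewrite Nat.sub_0_r, Nat.mul_0_r, (choose2_le1 0) by lia.
    pose proof (choose2_gt0 n Hn).
    rewrite (sum_f_R0_single _ 1%nat); [| lia |].
    + unfold red_dist; simpl binom_shift; rewrite Nat.mul_1_r.
      assert (INR (binom (n - 1) 1) <> 0)
        by (apply not_0_INR; pose proof (binom_pos (n - 1) 1); lia).
      simpl INR; field; lra.
    + intros [|[|x]] Hx; [| lia |]; unfold red_dist; simpl binom_shift;
        rewrite ?Nat.mul_0_r; simpl; unfold Rdiv; ring.
  - rewrite expect_at_S_last, IHt by lia.
    set (m := (n - S t)%nat).
    transitivity (sum_f_R0 (fun x => red_dist n (S t) x * prob_bb m x * G (S x)) n
                  + (sum_f_R0 (fun x => red_dist n (S t) x * prob_br m x * G x) n
                  + sum_f_R0 (fun x => red_dist n (S t) x * prob_rr m x * G (pred x)) n)).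
    { rewrite <- !sum_plus; apply sum_eq; intros i _; unfold step_expect; ring. }
    rewrite sum_shift_up by (apply Rmult_eq_0_compat_r, red_dist_large; lia).
    rewrite (sum_shift_down (fun x => red_dist n (S t) x * prob_rr m x))
      by (apply Rmult_eq_0_compat_r; first [apply red_dist_0 | apply red_dist_large; lia]).
    rewrite <- !sum_plus; apply sum_eq; intros i _.
    rewrite <- (red_dist_step n t i) by lia; fold m; ring.
Qed.

Lemma INR_sub1 x : (1 <= x)%nat -> INR (x - 1) = INR x - 1.
Proof. intros Hx; rewrite minus_INR by lia; simpl; ring. Qed.

Lemma prodR_ratio a b k :
  prodR (fun i => INR (a - i) / INR (b - i)) k = INR (ffact a k) / INR (ffact b k).
Proof.
  induction k as [|k IHk]; [unfold prodR; simpl; field|].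
  rewrite prodR_succ_r, IHk; simpl ffact; rewrite !mult_INR; unfold Rdiv.
  rewrite Rinv_mult; ring.
Qed.

Lemma tau_tail_prodR n k : tau_tail n k =
  prodR (fun i => IZR (Z.of_nat n - Z.of_nat k - Z.of_nat i)
                  / IZR (Z.of_nat n - 1 - Z.of_nat i)) k.
Proof. reflexivity. Qed.

Lemma tau_tail_ffact n k : (2 * k <= n)%nat ->
  tau_tail n k = INR (ffact (n - k) k) / INR (ffact (n - 1) k).
Proof.
  intros Hk; rewrite tau_tail_prodR.
  transitivity (prodR (fun i => INR (n - k - i) / INR (n - 1 - i)) k).
  - apply prodR_ext; intros i Hi; rewrite !INR_IZR_INZ; f_equal; f_equal; lia.
  - apply prodR_ratio.
Qed.

Lemma prodR_eq0 f k i : (i < k)%nat -> f i = 0 -> prodR f k = 0.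
Proof.
  induction k as [|k IHk]; intros Hi Hf; [lia|].
  rewrite prodR_succ_r; destruct (Nat.eq_dec i k) as [<-|E].
  - rewrite Hf; ring.
  - rewrite IHk by (auto; lia); ring.
Qed.

Lemma tau_tail_zero n k : (n < 2 * k)%nat -> (k <= n)%nat -> tau_tail n k = 0.
Proof.
  intros H1 H2; rewrite tau_tail_prodR; apply (prodR_eq0 _ _ (n - k)); [lia|].
  replace (Z.of_nat n - Z.of_nat k - Z.of_nat (n - k))%Z with 0%Z by lia.
  unfold Rdiv; ring.
Qed.

Lemma prodR_prob_bb_ffact n k : (2 * k <= n)%nat ->
  prodR (fun i => prob_bb (n - i) i) k = INR (ffact (n - k) k) / INR (ffact (n - 1) k).
Proof.
  induction k as [|k IHk]; intros Hk; [unfold prodR; simpl; field|].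
  rewrite prodR_succ_r, IHk by lia; unfold prob_bb; rewrite !choose2_INR.
  pose proof (ffact_pred_succ (n - k) k) as E.
  replace (n - k - 1)%nat with (n - S k)%nat in E by lia.
  apply (f_equal INR) in E; rewrite !mult_INR in E.
  change (ffact (n - 1) (S k)) with (ffact (n - 1) k * (n - 1 - k))%nat; rewrite mult_INR.
  assert (F0 : INR (ffact (n - 1) k) <> 0)
    by (apply not_0_INR; pose proof (ffact_pos (n - 1) k); lia).
  assert (A0 : INR (n - k) <> 0) by (apply not_0_INR; lia).
  assert (A1 : INR (n - 1 - k) <> 0) by (apply not_0_INR; lia).
  replace (INR (n - k) - 1) with (INR (n - 1 - k))
    by (replace (n - 1 - k)%nat with (n - k - 1)%nat by lia; rewrite INR_sub1 by lia; ring).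
  replace (INR (n - k - k) - 1) with (INR (n - k - S k))
    by (replace (n - k - S k)%nat with (n - k - k - 1)%nat by lia; rewrite INR_sub1 by lia; ring).
  apply (Rmult_eq_reg_r (INR (n - k))); auto.
  replace (INR (ffact (n - S k) (S k)) / (INR (ffact (n - 1) k) * INR (n - 1 - k)) * INR (n - k))
    with (INR (ffact (n - S k) (S k)) * INR (n - k) / (INR (ffact (n - 1) k) * INR (n - 1 - k)))
    by (field; auto).
  rewrite E; field; auto.
Qed.

Lemma prodR_prob_bb_zero n k : (n < 2 * k)%nat -> prodR (fun i => prob_bb (n - i) i) k = 0.
Proof.
  intros Hk; apply (prodR_eq0 _ _ (k - 1)); [lia|].
  unfold prob_bb; rewrite (choose2_le1 (n - (k - 1) - (k - 1))) by lia; unfold Rdiv; ring.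
Qed.

Theorem prob_red_at_k_eq_k n k : (1 <= k <= n - 1)%nat ->
  expect_at k n 0 (indicator k) = tau_tail n k.
Proof.
  intros Hk; change (indicator k) with (indicator (0 + k)).
  rewrite expect_at_indicator_top; simpl Nat.add.
  destruct (le_lt_dec (2 * k) n).
  - now rewrite prodR_prob_bb_ffact, tau_tail_ffact.
  - rewrite prodR_prob_bb_zero, tau_tail_zero by lia; reflexivity.
Qed.

Theorem prob_red_at_nk_eq_k n k : (2 <= n)%nat -> (1 <= k <= n - 1)%nat ->
  expect_at (n - k) n 0 (indicator k) = tau_tail n k.
Proof.
  intros Hn Hk; rewrite expect_at_red_dist by lia.
  rewrite (sum_f_R0_single _ k); [| lia |].
  2:{ intros x Hx; unfold indicator; destruct (Nat.eqb_spec x k); [lia | ring]. }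
  unfold indicator, red_dist; rewrite Nat.eqb_refl, Rmult_1_r.
  replace (n - (n - k))%nat with k by lia; rewrite binom_nn, Nat.mul_1_l.
  destruct k as [|q]; [lia|]; simpl binom_shift.
  destruct (le_lt_dec (2 * S q) n).
  - rewrite tau_tail_ffact by lia.
    set (d := (n - 2 * S q)%nat).
    assert (En : n = (2 * q + d + 2)%nat) by (unfold d; lia); clearbody d; subst n.
    replace (2 * q + d + 2 - S q - 1)%nat with (q + d)%nat by lia.
    replace (2 * q + d + 2 - 1)%nat with (2 * q + d + 1)%nat by lia.
    replace (2 * q + d + 2 - S q)%nat with (q + d + 1)%nat by lia.
    replace (S q) with (q + 1)%nat by lia.
    pose proof (binom_ffact_cross q d) as C; apply (f_equal INR) in C; rewrite !mult_INR in C.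
    assert (F0 : INR (ffact (2 * q + d + 1) (q + 1)) <> 0)
      by (apply not_0_INR; pose proof (ffact_pos (2 * q + d + 1) (q + 1)); lia).
    assert (F1 : INR (binom (2 * q + d + 1) (q + d + 1)) <> 0)
      by (apply not_0_INR; pose proof (binom_pos (2 * q + d + 1) (q + d + 1)); lia).
    apply (Rmult_eq_reg_r (INR (ffact (2 * q + d + 1) (q + 1))
                           * INR (binom (2 * q + d + 1) (q + d + 1))));
      [| now apply Rmult_integral_contrapositive_currified].
    field_simplify; auto; rewrite C; ring.
  - rewrite tau_tail_zero, binom_small by lia; simpl; unfold Rdiv; ring.
Qed.

(** * The stopping times on trajectories *)

Open Scope nat_scope.

Lemma fold_left_select_ge (P : nat -> bool) len a acc k : acc <= a ->
  k <= fold_left (fun acc j => if P j then j else acc) (seq a len) acc <->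
  k <= acc \/ exists j, a <= j < a + len /\ P j = true /\ k <= j.
Proof.
  revert a acc; induction len as [|len IHlen]; intros a acc Hacc; simpl.
  - split; [now left | intros [H | (j & Hj & _)]; [exact H | lia]].
  - rewrite IHlen by (destruct (P a); lia).
    destruct (P a) eqn:Pa; split.
    + intros [H | (j & Hj & Pj & Hk)]; right; [exists a | exists j]; repeat split; auto; lia.
    + intros [H | (j & Hj & Pj & Hk)]; [left; lia|].
      destruct (Nat.eq_dec j a) as [->|E]; [now left | right; exists j; split; auto; lia].
    + intros [H | (j & Hj & Pj & Hk)]; [now left | right; exists j; split; auto; lia].
    + intros [H | (j & Hj & Pj & Hk)]; [now left|].
      destruct (Nat.eq_dec j a) as [->|E]; [congruence | right; exists j; split; auto; lia].
Qed.

Lemma tau_ge n U k : 1 <= k ->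
  k <= tau n U <-> exists j, 1 <= j <= n /\ U_at U (n - j) = j /\ k <= j.
Proof.
  intros Hk; unfold tau; rewrite fold_left_select_ge by lia.
  split; [intros [H | (j & Hj & Pj & Hkj)] | intros (j & Hj & Pj & Hkj)]; [lia | |].
  - apply Nat.eqb_eq in Pj; exists j; repeat split; auto; lia.
  - right; exists j; rewrite Nat.eqb_eq; repeat split; auto; lia.
Qed.

Lemma tau'_ge n U k : 1 <= k ->
  k <= tau' n U <-> exists j, 1 <= j <= n /\ U_at U j = j /\ k <= j.
Proof.
  intros Hk; unfold tau'; rewrite fold_left_select_ge by lia.
  split; [intros [H | (j & Hj & Pj & Hkj)] | intros (j & Hj & Pj & Hkj)]; [lia | |].
  - apply Nat.eqb_eq in Pj; exists j; repeat split; auto; lia.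
  - right; exists j; rewrite Nat.eqb_eq; repeat split; auto; lia.
Qed.

Lemma feasible_nth m r s : feasible m r s -> forall i, S i <= length s ->
  nth (S i) (r :: s) 0 <= nth i (r :: s) 0 + 1 /\
  nth i (r :: s) 0 <= nth (S i) (r :: s) 0 + 1 /\
  nth (S i) (r :: s) 0 <= m - S i.
Proof.
  revert m r; induction s as [|x s IHs]; intros m r Hxs i Hi; simpl in Hi; [lia|].
  destruct Hxs as [Hx Hs]; destruct i as [|i]; simpl; [lia|].
  destruct (IHs (m - 1) x Hs i) as (H1 & H2 & H3); [lia|]; simpl in H1, H2, H3.
  repeat split; lia.
Qed.

Section FeasibleTrajectory.

Variables (n : nat) (s : list nat).
Hypotheses (Hn : 2 <= n) (Hlen : length s = n - 1) (Hs : feasible n 0 s).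

Local Notation u i := (nth i (0 :: s) 0).

Lemma red_step i : S i <= n - 1 ->
  u (S i) <= u i + 1 /\ u i <= u (S i) + 1 /\ u (S i) <= n - S i.
Proof. intros Hi; apply (feasible_nth n 0 s Hs); lia. Qed.

Lemma red_le_time i : i <= n - 1 -> u i <= i.
Proof.
  induction i as [|i IHi]; intros Hi; [simpl; lia|].
  pose proof (red_step i Hi); pose proof (IHi ltac:(lia)); lia.
Qed.

Lemma red_le_balls i : i <= n - 1 -> u i <= n - i.
Proof. destruct i as [|i]; intros Hi; [simpl; lia | pose proof (red_step i Hi); lia]. Qed.

Lemma red_growth k j : k <= j <= n - 1 -> u j <= u k + (j - k).
Proof.
  induction j as [|j IHj]; intros Hj; [replace k with 0 by lia; lia|].
  destruct (Nat.eq_dec k (S j)) as [->|E]; [lia|].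
  pose proof (red_step j ltac:(lia)); pose proof (IHj ltac:(lia)); lia.
Qed.

Lemma black_nonincreasing k j : k <= j <= n - 1 -> n - j - u j <= n - k - u k.
Proof.
  induction j as [|j IHj]; intros Hj; [replace k with 0 by lia; lia|].
  destruct (Nat.eq_dec k (S j)) as [->|E]; [lia|].
  pose proof (red_step j ltac:(lia)); pose proof (IHj ltac:(lia)); lia.
Qed.

Local Notation U := (0 :: s ++ [0]).

Lemma U_at_lt i : i < n -> U_at U i = u i.
Proof. intros Hi; unfold U_at; rewrite app_comm_cons; apply app_nth1; simpl; lia. Qed.

Lemma U_at_n : U_at U n = 0.
Proof.
  unfold U_at; rewrite app_comm_cons, app_nth2 by (simpl; lia).
  simpl length; now replace (n - S (length s)) with 0 by lia.
Qed.

Lemma tau_ge_iff k : 1 <= k <= n - 1 -> k <= tau n U <-> u (n - k) = k.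
Proof.
  intros Hk; rewrite tau_ge by lia; split.
  - intros (j & Hj & Uj & Hkj).
    destruct (Nat.eq_dec j n) as [->|E].
    + rewrite Nat.sub_diag in Uj; unfold U_at in Uj; simpl in Uj; lia.
    + rewrite U_at_lt in Uj by lia.
      pose proof (black_nonincreasing (n - j) (n - k) ltac:(lia)).
      pose proof (red_le_balls (n - k) ltac:(lia)); lia.
  - intros Uk; exists k; rewrite U_at_lt by lia; repeat split; auto; lia.
Qed.

Lemma tau'_ge_iff k : 1 <= k <= n - 1 -> k <= tau' n U <-> u k = k.
Proof.
  intros Hk; rewrite tau'_ge by lia; split.
  - intros (j & Hj & Uj & Hkj).
    destruct (Nat.eq_dec j n) as [->|E]; [rewrite U_at_n in Uj; lia|].
    rewrite U_at_lt in Uj by lia.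
    pose proof (red_growth k j ltac:(lia)); pose proof (red_le_time k ltac:(lia)); lia.
  - intros Uk; exists k; rewrite U_at_lt by lia; repeat split; auto; lia.
Qed.

Lemma tau_lt_n : tau n U < n.
Proof.
  destruct (le_lt_dec n (tau n U)) as [H|H]; [exfalso | exact H].
  apply tau_ge in H as (j & Hj & Uj & Hkj); [|lia].
  replace j with n in Uj by lia; rewrite Nat.sub_diag in Uj.
  unfold U_at in Uj; simpl in Uj; lia.
Qed.

Lemma tau'_lt_n : tau' n U < n.
Proof.
  destruct (le_lt_dec n (tau' n U)) as [H|H]; [exfalso | exact H].
  apply tau'_ge in H as (j & Hj & Uj & Hkj); [|lia].
  replace j with n in Uj by lia; rewrite U_at_n in Uj; lia.
Qed.

End FeasibleTrajectory.

Close Scope nat_scope.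

Lemma urnP_ext n (A1 A2 : list nat -> bool) :
  (forall s, length s = (n - 1)%nat -> feasible n 0 s ->
             A1 (0%nat :: s ++ [0%nat]) = A2 (0%nat :: s ++ [0%nat])) ->
  urnP n A1 = urnP n A2.
Proof.
  intros H; unfold urnP, urnE; apply pathE_ext; [lia|].
  intros s Hl Hs; now rewrite H.
Qed.

Lemma urnP_event_red_at n (A : list nat -> bool) i y : (2 <= n)%nat -> (i <= n - 1)%nat ->
  (forall s, length s = (n - 1)%nat -> feasible n 0 s ->
             A (0%nat :: s ++ [0%nat]) = Nat.eqb (nth i (0%nat :: s) 0%nat) y) ->
  urnP n A = expect_at i n 0 (indicator y).
Proof.
  intros Hn Hi H; unfold urnP, urnE; rewrite <- (pathE_nth i (n - 1)) by lia.
  apply pathE_ext; [lia|]; intros s Hl Hs; rewrite H by auto; reflexivity.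
Qed.

Theorem tail_tau n k : (2 <= n)%nat -> (k <= n - 1)%nat ->
  urnP n (fun U => Nat.leb k (tau n U)) = tau_tail n k.
Proof.
  intros Hn Hk; destruct (Nat.eq_dec k 0) as [->|Hk0].
  - unfold urnP, urnE; simpl; apply pathE_const; lia.
  - rewrite (urnP_event_red_at n _ (n - k) k) by (try lia;
      intros s Hl Hs; apply Bool.eq_iff_eq_true; rewrite Nat.leb_le, Nat.eqb_eq;
      apply tau_ge_iff; auto; lia).
    apply prob_red_at_nk_eq_k; lia.
Qed.

Theorem tail_tau' n k : (2 <= n)%nat -> (1 <= k <= n - 1)%nat ->
  urnP n (fun U => Nat.leb k (tau' n U)) = tau_tail n k.
Proof.
  intros Hn Hk; rewrite (urnP_event_red_at n _ k k) by (try lia;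
    intros s Hl Hs; apply Bool.eq_iff_eq_true; rewrite Nat.leb_le, Nat.eqb_eq;
    now apply tau'_ge_iff).
  now apply prob_red_at_k_eq_k.
Qed.

Lemma tails_eq n k : (2 <= n)%nat ->
  urnP n (fun U => Nat.leb k (tau n U)) = urnP n (fun U => Nat.leb k (tau' n U)).
Proof.
  intros Hn; destruct (Nat.eq_dec k 0) as [->|Hk0]; [now apply urnP_ext|].
  destruct (le_lt_dec k (n - 1)).
  - rewrite tail_tau, tail_tau'; auto; lia.
  - apply urnP_ext; intros s Hl Hs.
    pose proof (tau_lt_n n s Hn Hl); pose proof (tau'_lt_n n s Hn Hl).
    rewrite !(proj2 (Nat.leb_gt _ _)) by lia; reflexivity.
Qed.

Lemma urnP_eq_split n (X : list nat -> nat) j :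
  urnP n (fun U => Nat.eqb (X U) j)
  = urnP n (fun U => Nat.leb j (X U)) - urnP n (fun U => Nat.leb (S j) (X U)).
Proof.
  unfold urnP, urnE; rewrite <- pathE_minus; apply pathE_ext; [lia|]; intros s _ _.
  set (x := X (0%nat :: s ++ [0%nat])).
  destruct (Nat.eqb_spec x j), (Nat.leb_spec j x), (Nat.leb_spec (S j) x); try lia; ring.
Qed.

Theorem tau_tau'_same_law n j : (2 <= n)%nat ->
  urnP n (fun U => Nat.eqb (tau n U) j) = urnP n (fun U => Nat.eqb (tau' n U) j).
Proof. intros Hn; now rewrite !urnP_eq_split, !(tails_eq n _ Hn). Qed.

(** * The Rayleigh limit *)

Lemma exp_le_compat x y : x <= y -> exp x <= exp y.
Proof. intros [H | ->]; [left; now apply exp_increasing | lra]. Qed.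

Lemma exp_neg_le_one_minus x : 0 <= x <= 1 / 2 -> exp (- (x + 2 * x ^ 2)) <= 1 - x.
Proof.
  intros Hx; set (y := x + 2 * x ^ 2).
  assert (Hy : 0 <= y) by (unfold y; nra).
  assert (Ey : (1 + y / 2) * (1 + y / 2) <= exp y).
  { replace (exp y) with (exp (y / 2) * exp (y / 2)) by (rewrite <- exp_plus; f_equal; field).
    pose proof (exp_ineq1_le (y / 2)); apply Rmult_le_compat; lra. }
  assert (Hp : 1 <= (1 - x) * ((1 + y / 2) * (1 + y / 2))).
  { assert (E : (1 - x) * ((1 + y / 2) * (1 + y / 2)) - 1 = x ^ 2 * (5 / 4 - 5 / 4 * x - x ^ 3))
      by (unfold y; field).
    assert (x * x <= 1 / 4) by nra.
    assert (x ^ 3 <= 1 / 8) by (simpl; nra).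
    assert (0 <= x ^ 2) by nra; nra. }
  rewrite exp_Ropp; pose proof (exp_pos y).
  apply (Rmult_le_reg_r (exp y)); [lra|]; rewrite Rinv_l by lra.
  apply (Rle_trans _ _ _ Hp), Rmult_le_compat_l; lra.
Qed.

Lemma prodR_one_minus_exp_bounds f K c c' : 0 <= c -> c' <= 1 / 2 ->
  (forall i, (i < K)%nat -> c <= f i <= c') ->
  exp (- (INR K * (c' + 2 * c' ^ 2))) <= prodR (fun i => 1 - f i) K <= exp (- (INR K * c)).
Proof.
  intros Hc Hc' Hf; induction K as [|K IHK].
  - unfold prodR; simpl; rewrite !Rmult_0_l, Ropp_0, exp_0; lra.
  - destruct IHK as [Lo Hi]; [intros i Hi; apply Hf; lia|].
    destruct (Hf K (Nat.lt_succ_diag_r K)) as [Fc Fc'].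
    rewrite prodR_succ_r, S_INR.
    replace (- ((INR K + 1) * (c' + 2 * c' ^ 2)))
      with (- (INR K * (c' + 2 * c' ^ 2)) + - (c' + 2 * c' ^ 2)) by ring.
    replace (- ((INR K + 1) * c)) with (- (INR K * c) + - c) by ring.
    rewrite !exp_plus; pose proof (exp_pos (- (INR K * (c' + 2 * c' ^ 2)))); split.
    + apply Rmult_le_compat; try lra; [left; apply exp_pos|].
      apply Rle_trans with (exp (- (f K + 2 * f K ^ 2))).
      * apply exp_le_compat; assert (f K ^ 2 <= c' ^ 2) by (apply pow_incr; lra); lra.
      * apply exp_neg_le_one_minus; lra.
    + apply Rmult_le_compat; try lra.
      pose proof (exp_ineq1_le (- f K)); pose proof (exp_le_compat (- f K) (- c)); lra.
Qed.

Lemma tau_tail_factor n K i : (1 <= K <= n - 1)%nat -> (i < K)%nat ->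
  IZR (Z.of_nat n - Z.of_nat K - Z.of_nat i) / IZR (Z.of_nat n - 1 - Z.of_nat i)
  = 1 - (INR K - 1) / (INR n - 1 - INR i).
Proof.
  intros HK Hi; rewrite !minus_IZR, <- !INR_IZR_INZ.
  assert (INR i + 1 <= INR K) by (rewrite <- S_INR; apply le_INR; lia).
  assert (INR K + 1 <= INR n) by (rewrite <- S_INR; apply le_INR; lia).
  field; lra.
Qed.

Theorem tau_tail_exp_bounds n K : (K <= n - 1)%nat ->
  (INR K - 1) / (INR n - INR K) <= 1 / 2 ->
  exp (- (INR K * ((INR K - 1) / (INR n - INR K) + 2 * ((INR K - 1) / (INR n - INR K)) ^ 2)))
  <= tau_tail n K <= exp (- (INR K * ((INR K - 1) / (INR n - 1)))).
Proof.
  intros HKn Hc'; destruct K as [|K'].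
  - unfold tau_tail; simpl; rewrite !Rmult_0_l, Ropp_0, exp_0; lra.
  - set (K := S K') in *.
    assert (HK1 : 1 <= INR K) by (apply (le_INR 1); unfold K; lia).
    assert (HKn' : INR K + 1 <= INR n) by (rewrite <- S_INR; apply le_INR; lia).
    rewrite tau_tail_prodR, (prodR_ext _ (fun i => 1 - (INR K - 1) / (INR n - 1 - INR i)))
      by (intros i Hi; apply tau_tail_factor; unfold K in *; lia).
    apply prodR_one_minus_exp_bounds; auto.
    + apply Rmult_le_pos; [lra | left; apply Rinv_0_lt_compat; lra].
    + intros i Hi; assert (INR i + 1 <= INR K) by (rewrite <- S_INR; apply le_INR; lia).
      pose proof (pos_INR i).
      split; apply Rmult_le_compat_l; try lra; apply Rinv_le_contravar; lra.
Qed.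

Definition ceil_nat (x : R) : nat := Z.to_nat (- Int_part (- x)).

Lemma ceil_nat_spec x : 0 <= x -> INR (ceil_nat x) - 1 < x <= INR (ceil_nat x).
Proof.
  intros Hx; destruct (base_Int_part (- x)) as [H1 H2].
  assert (Hz : (0 <= - Int_part (- x))%Z) by (apply le_IZR; rewrite opp_IZR; lra).
  unfold ceil_nat; rewrite INR_IZR_INZ, Z2Nat.id, opp_IZR by exact Hz; lra.
Qed.

Lemma event_ceil t n x : 0 <= t -> 0 < sqrt (INR n) ->
  (if Rle_dec t (INR x / sqrt (INR n)) then true else false)
  = Nat.leb (ceil_nat (t * sqrt (INR n))) x.
Proof.
  intros Ht Hr; set (r := sqrt (INR n)) in *.
  destruct (ceil_nat_spec (t * r)) as [Lo Hi]; [nra|].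
  set (K := ceil_nat (t * r)) in *.
  assert (Ediv : t <= INR x / r <-> t * r <= INR x).
  { split; intros H.
    - apply (Rmult_le_compat_r r) in H; [|lra].
      now unfold Rdiv in H; rewrite Rmult_assoc, Rinv_l, Rmult_1_r in H by lra.
    - apply (Rmult_le_reg_r r); [lra|].
      now unfold Rdiv; rewrite Rmult_assoc, Rinv_l, Rmult_1_r by lra. }
  destruct (Rle_dec t (INR x / r)) as [H|H]; destruct (Nat.leb_spec K x) as [HK|HK]; auto.
  - apply Ediv in H; apply le_INR in HK; rewrite S_INR in HK; lra.
  - exfalso; apply H, Ediv; apply le_INR in HK; lra.
Qed.

Lemma is_lim_seq_inv_sqrt : is_lim_seq (fun n => / sqrt (INR n)) 0.
Proof.
  apply (is_lim_seq_ext (fun n => sqrt (/ INR n))); [intros n; apply sqrt_inv|].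
  rewrite <- sqrt_0; apply is_lim_seq_continuous; [apply continuity_pt_sqrt; lra|].
  apply (is_lim_seq_inv _ p_infty); [apply is_lim_seq_INR | discriminate].
Qed.

Lemma is_lim_seq_exp_opp (u : nat -> R) (l : R) :
  is_lim_seq u l -> is_lim_seq (fun n => exp (- u n)) (exp (- l)).
Proof.
  intros H; apply (is_lim_seq_continuous (fun x => exp (- x))).
  - apply derivable_continuous_pt, derivable_pt_comp;
      [apply derivable_pt_opp, derivable_pt_id | apply derivable_pt_exp].
  - exact H.
Qed.

Lemma sqrt_INR_facts n : (1 <= n)%nat -> 0 < sqrt (INR n) /\ INR n = sqrt (INR n) * sqrt (INR n).
Proof.
  intros Hn; assert (1 <= INR n) by (apply (le_INR 1); lia).
  split; [apply sqrt_lt_R0; lra | rewrite sqrt_sqrt; lra].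
Qed.

Section RayleighLimit.

Variable t : R.
Hypothesis Ht : 0 <= t.

Local Notation K n := (INR (ceil_nat (t * sqrt (INR n)))).
Local Notation s n := (/ sqrt (INR n)).

Lemma is_lim_seq_ceil_scaled : is_lim_seq (fun n => K n * s n) t.
Proof.
  apply (is_lim_seq_le_le_loc (fun _ => t) _ (fun n => t + s n)).
  - exists 1%nat; intros n Hn; destruct (sqrt_INR_facts n Hn) as [Hr _].
    destruct (ceil_nat_spec (t * sqrt (INR n))) as [Lo Hi]; [nra|].
    assert (Hs : 0 < s n) by (apply Rinv_0_lt_compat; lra).
    replace t with (t * sqrt (INR n) * s n) at 1 by (field; lra).
    replace (t + s n) with ((t * sqrt (INR n) + 1) * s n) by (field; lra).
    split; apply Rmult_le_compat_r; lra.
  - apply is_lim_seq_const.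
  - pose proof (is_lim_seq_plus' _ _ t 0 (is_lim_seq_const t) is_lim_seq_inv_sqrt) as H.
    now rewrite Rplus_0_r in H.
Qed.

Lemma is_lim_seq_ceil_over_n : is_lim_seq (fun n => K n * s n * s n) 0.
Proof.
  pose proof (is_lim_seq_mult' _ _ _ _ is_lim_seq_ceil_scaled is_lim_seq_inv_sqrt) as H.
  now rewrite Rmult_0_r in H.
Qed.

Lemma eventually_ceil_small : eventually (fun n => (2 <= n)%nat /\ 3 * K n < INR n).
Proof.
  destruct (proj2 (is_lim_seq_spec _ _) is_lim_seq_ceil_over_n (mkposreal (1 / 3) ltac:(lra)))
    as [N HN].
  exists (max 2 N); intros n Hn; split; [lia|].
  specialize (HN n ltac:(lia)); simpl in HN; rewrite Rminus_0_r in HN.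
  apply Rabs_def2 in HN as [HN _].
  destruct (sqrt_INR_facts n ltac:(lia)) as [Hr Hnr].
  replace (K n * s n * s n) with (K n / INR n) in HN
    by (set (r := sqrt (INR n)) in *; rewrite Hnr; field; lra).
  apply (Rmult_lt_compat_r (INR n)) in HN; [|nra].
  unfold Rdiv in HN; rewrite Rmult_assoc, Rinv_l in HN by nra; lra.
Qed.

Lemma is_lim_seq_upper_rate : is_lim_seq (fun n => K n * ((K n - 1) / (INR n - 1))) (t ^ 2).
Proof.
  apply (is_lim_seq_ext_loc
           (fun n => K n * s n * (K n * s n - s n) / (1 - s n * s n))).
  - exists 2%nat; intros n Hn; destruct (sqrt_INR_facts n ltac:(lia)) as [Hr Hnr].
    assert (2 <= INR n) by (apply (le_INR 2); lia).
    set (r := sqrt (INR n)) in *; rewrite Hnr in *; field; nra.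
  - replace (t ^ 2) with (t * (t - 0) / (1 - 0 * 0)) by field.
    apply is_lim_seq_div'; [| | lra].
    + apply is_lim_seq_mult'; [apply is_lim_seq_ceil_scaled|].
      apply is_lim_seq_minus'; [apply is_lim_seq_ceil_scaled | apply is_lim_seq_inv_sqrt].
    + apply is_lim_seq_minus'; [apply is_lim_seq_const|].
      apply is_lim_seq_mult'; apply is_lim_seq_inv_sqrt.
Qed.

Lemma is_lim_seq_lower_rate :
  is_lim_seq (fun n => K n * ((K n - 1) / (INR n - K n)
                              + 2 * ((K n - 1) / (INR n - K n)) ^ 2)) (t ^ 2).
Proof.
  set (a n := K n * s n).
  (* With a = K/sqrt n and s = 1/sqrt n: (K-1)/(n-K) = s (a-s)/(1-as). *)
  apply (is_lim_seq_ext_loc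
           (fun n => a n * (a n - s n) / (1 - a n * s n)
                     + 2 * (a n * (a n - s n) / (1 - a n * s n))
                         * (s n * (a n - s n) / (1 - a n * s n)))).
  - destruct eventually_ceil_small as [N HN]; exists N; intros n Hn.
    destruct (HN n Hn) as [Hn2 HK]; destruct (sqrt_INR_facts n ltac:(lia)) as [Hr Hnr].
    unfold a; set (r := sqrt (INR n)) in *; rewrite Hnr in *.
    assert (0 <= K n) by apply pos_INR.
    field; nra.
  - replace (t ^ 2) with (t * (t - 0) / (1 - t * 0) + 2 * (t * (t - 0) / (1 - t * 0))
                          * (0 * (t - 0) / (1 - t * 0))) by field.
    assert (La : is_lim_seq a t) by apply is_lim_seq_ceil_scaled.
    assert (Ls : is_lim_seq (fun n => s n) 0) by apply is_lim_seq_inv_sqrt.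
    assert (Ld : is_lim_seq (fun n => 1 - a n * s n) (1 - t * 0))
      by (apply is_lim_seq_minus'; [apply is_lim_seq_const | now apply is_lim_seq_mult']).
    assert (Lm : is_lim_seq (fun n => a n - s n) (t - 0)) by now apply is_lim_seq_minus'.
    apply is_lim_seq_plus'; [apply is_lim_seq_div'; auto; [now apply is_lim_seq_mult' | lra]|].
    apply is_lim_seq_mult'; [apply is_lim_seq_mult'; [apply is_lim_seq_const|] |];
      apply is_lim_seq_div'; auto; try lra; now apply is_lim_seq_mult'.
Qed.

Theorem tau_over_sqrt_limit :
  Un_cv (fun n => urnP n (fun U => if Rle_dec t (INR (tau n U) / sqrt (INR n))
                                   then true else false))
        (exp (- t ^ 2)).
Proof.
  apply is_lim_seq_Reals.
  eapply is_lim_seq_le_le_loc;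
    [| apply (is_lim_seq_exp_opp _ _ is_lim_seq_lower_rate)
     | apply (is_lim_seq_exp_opp _ _ is_lim_seq_upper_rate)].
  destruct eventually_ceil_small as [N HN]; exists N; intros n Hn.
  destruct (HN n Hn) as [Hn2 HK]; destruct (sqrt_INR_facts n ltac:(lia)) as [Hr _].
  assert (HKn : (ceil_nat (t * sqrt (INR n)) <= n - 1)%nat).
  { assert (HK' : K n < INR n) by (pose proof (pos_INR (ceil_nat (t * sqrt (INR n)))); lra).
    apply INR_lt in HK'; lia. }
  rewrite (urnP_ext n _ (fun U => Nat.leb (ceil_nat (t * sqrt (INR n))) (tau n U)))
    by (intros; now apply event_ceil).
  rewrite tail_tau by assumption.
  apply tau_tail_exp_bounds; [exact HKn|].
  assert (0 <= K n) by apply pos_INR.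
  apply (Rmult_le_reg_r (INR n - K n)); [lra|].
  unfold Rdiv; rewrite Rmult_assoc, Rinv_l by lra; lra.
Qed.

End RayleighLimit.

Theorem mainTheorem10 :
  (forall n : nat, (2 <= n)%nat ->
     forall j : nat,
       urnP n (fun U => Nat.eqb (tau n U) j) =
       urnP n (fun U => Nat.eqb (tau' n U) j)) /\
  (forall n k : nat, (2 <= n)%nat -> (1 <= k)%nat -> (k <= n - 1)%nat ->
     urnP n (fun U => Nat.leb k (tau n U)) = tau_tail n k) /\
  (forall t : R, 0 <= t ->
     Un_cv (fun n : nat =>
              urnP n (fun U => if Rle_dec t (INR (tau n U) / sqrt (INR n))
                               then true else false))
           (exp (- t ^ 2))).
Proof.
  split; [|split].
  - intros n Hn j; now apply tau_tau'_same_law.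
  - intros n k Hn _ Hk; now apply tail_tau.
  - exact tau_over_sqrt_limit.
Qed.
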